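(* Let $\Bbbk$ be a field of characteristic zero, let $n \geq 3$, $d \geq 2$, and $S=\Bbbk[x_1,\ldots,x_n]$. Let $$\beta(n,d) =\binom{n+d-1}{d}-\begin{cases} 3(d-1) & \text{if } n=3 \text{ and } d\geq 3 \text{ is odd,} \\ 3(d-1)+1 & \text{if } n=3 \text{ and } d\geq 2 \text{ is even,} \\ 2d & \text{if } n\geq 4. \end{cases}$$ Then for every integer $\mu\in \left[\mathrm{HF}(S,d)-\mathrm{HF}(S,d-1), \beta(n,d) \right]$ there exists an artinian monomial ideal $I$ minimally generated by $\mu$ elements of degree $d$ such that $S/I$ fails the WLP by surjectivity in degree $d-1$. Moreover, this interval is non-empty except for the case $n=3$, $d= 2$.
   Context: $\mathrm{HF}(A,k)=\dim_\Bbbk A_k$. For a monomial ideal $I$, $A=S/I$ fails the WLP in degree $i$ if $\times(x_1+\cdots+x_n): A_i\to A_{i+1}$ does not have maximal rank; it fails the WLP by surjectivity in degree $i$ if in addition $\mathrm{HF}(A,i)\ge \mathrm{HF}(A,i+1)$. *)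

From HB Require Import structures.
From mathcomp Require Import all_boot all_order all_algebra.
From mathcomp Require Import mpoly.
Set Implicit Arguments. Unset Strict Implicit. Unset Printing Implicit Defensive.
Import Order.TTheory GRing.Theory.
Local Open Scope ring_scope.

Section WLPDefs.
Variables (K : fieldType) (n : nat).

(* Coefficient row vector of p on the (finite) set of monomials of degree < b.
   For polynomials of degree < b this is an injective linear map. *)
Definition coefrow (b : nat) (p : {mpoly K[n]}) : 'rV[K]_#|{: 'X_{1..n < b}}| :=
  \row_(j < #|{: 'X_{1..n < b}}|) p@_(val (enum_val j)).

Definition dimspan (b : nat) (s : seq {mpoly K[n]}) : nat :=
  \rank (\matrix_(i < size s) coefrow b (s`_i)).

Definition Sbasis (k : nat) : seq {mpoly K[n]} :=
  [seq 'X_[val m] | m <- enum {: 'X_{1..n < k.+1}} & mdeg (val m) == k].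

Definition HF_S (k : nat) : nat := dimspan k.+1 (Sbasis k).

(* Spanning list of I_k, the degree-k component of the ideal I of S generated
   by the monomials x^g, g in G :  I_k = sum_g S_{k - deg g} * x^g. *)
Definition Ipart (G : seq 'X_{1..n}) (k : nat) : seq {mpoly K[n]} :=
  flatten [seq [seq 'X_[val m] * 'X_[g]
                 | m <- enum {: 'X_{1..n < k.+1}} & (mdeg (val m) + mdeg g == k)%N]
           | g <- G].

Definition HF_A (G : seq 'X_{1..n}) (k : nat) : nat :=
  (HF_S k - dimspan k.+1 (Ipart G k))%N.

Definition ell : {mpoly K[n]} := \sum_(i < n) 'X_i.

(* rank of  x l : A_k -> A_{k+1}, A = S/I.  Its image is (l S_k + I_{k+1}) / I_{k+1}. *)
Definition rank_ell (G : seq 'X_{1..n}) (k : nat) : nat :=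
  subn (dimspan k.+2 ([seq ell * p | p <- Sbasis k] ++ Ipart G k.+1))
       (dimspan k.+2 (Ipart G k.+1)).

Definition fails_WLP_in (G : seq 'X_{1..n}) (k : nat) : Prop :=
  rank_ell G k <> minn (HF_A G k) (HF_A G k.+1).

Definition fails_WLP_surj_in (G : seq 'X_{1..n}) (k : nat) : Prop :=
  fails_WLP_in G k /\ (HF_A G k.+1 <= HF_A G k)%N.

Definition artinian (G : seq 'X_{1..n}) : Prop :=
  exists D : nat, forall k : nat, (D <= k)%N -> HF_A G k = 0%N.

(* G is the minimal monomial generating set of I, of mu elements of degree d:
   distinct monomials of one degree, none divisible by another *)
Definition min_gens_deg (G : seq 'X_{1..n}) (mu d : nat) : Prop :=
  [/\ uniq G, size G = mu & all (fun g => mdeg g == d) G].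

End WLPDefs.

Definition beta (n d : nat) : nat :=
  ('C(n + d - 1, d) -
   (if n == 3 then (if odd d then 3 * (d - 1) else 3 * (d - 1) + 1) else 2 * d))%N.

From HB Require Import structures.
From mathcomp Require Import all_boot all_order all_algebra.
From mathcomp Require Import mpoly.
From mathcomp Require Import ring zify.
Set Implicit Arguments. Unset Strict Implicit. Unset Printing Implicit Defensive.
Import Order.TTheory GRing.Theory.

(* Failure by surjectivity is certified by a linear form c on S_d that vanishes
   on l S_{d-1} and on the pure powers x_i^d but not on all of S_d: if I is
   generated by degree-d monomials killed by c, then l A_{d-1} lies in the proper
   subspace ker c / I_d of A_d, while I_{d-1} = 0 gives dim A_{d-1} >= dim A_d
   once I has at least HF(S,d) - HF(S,d-1) generators.  For such I we take all
   degree-d monomials outside a set of nu = HF(S,d) - mu monomials containing the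
   support of c and no pure power; the pure powers make S/I artinian.  This
   works whenever nu >= |supp c|, and suitable forms exist with support 2d for
   n >= 4 (c(x_0^a x_1^b x_2^p x_3^q) = (-1)^(a+q) on p + q = 1) and of size
   3(d-1) or 3(d-1)+1 for n = 3, which is where beta(n,d) comes from. *)

Section Dimspan.
Variables (K : fieldType) (n : nat).
Local Open Scope ring_scope.

Lemma sum_enum_bmnm_eq b (m : 'X_{1..n}) (f : 'X_{1..n} -> K) : (mdeg m < b)%N ->
  \sum_(j < #|{: 'X_{1..n < b}}|) (m == val (enum_val j))%:R * f (val (enum_val j))
  = f m.
Proof.
move=> lt_m_b.
rewrite -(big_enum_val (A := {: 'X_{1..n < b}})
                       (fun x : 'X_{1..n < b} => (m == val x)%:R * f (val x))).
rewrite (bigD1 (BMultinom lt_m_b)) //= eqxx mul1r big1 ?addr0 // => x ne_x_m.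
suff /negbTE -> : m != val x by rewrite mul0r.
by apply: contra ne_x_m => /eqP m_x; apply/eqP/val_inj.
Qed.

Lemma coefrow0 b : coefrow b (0 : {mpoly K[n]}) = 0.
Proof. by apply/rowP => j; rewrite !mxE mcoeff0. Qed.

Lemma coefrowD b (p q : {mpoly K[n]}) : coefrow b (p + q) = coefrow b p + coefrow b q.
Proof. by apply/rowP => j; rewrite !mxE mcoeffD. Qed.

Definition span_mx b (s : seq {mpoly K[n]}) := \matrix_(i < size s) coefrow b s`_i.

Lemma dimspanE b s : dimspan b s = \rank (span_mx b s).
Proof. by []. Qed.

Lemma coefrow_sub_span b s p : p \in s -> (coefrow b p <= span_mx b s)%MS.
Proof.
move=> s_p; have lt_ps : (index p s < size s)%N by rewrite index_mem.
by have := row_sub (Ordinal lt_ps) (span_mx b s); rewrite rowK /= nth_index.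
Qed.

Lemma dimspanS b (s t : seq {mpoly K[n]}) : {subset s <= t} ->
  (dimspan b s <= dimspan b t)%N.
Proof.
move=> sub_st; apply: mxrankS; apply/row_subP => i; rewrite rowK.
exact/coefrow_sub_span/sub_st/mem_nth.
Qed.

Lemma dimspan_leq_size b (s : seq {mpoly K[n]}) : (dimspan b s <= size s)%N.
Proof. exact: rank_leq_row. Qed.

Lemma dimspan_monomials b (s : seq 'X_{1..n}) :
  uniq s -> all (fun m => mdeg m < b)%N s ->
  dimspan b [seq 'X_[m] : {mpoly K[n]} | m <- s] = size s.
Proof.
move=> uniq_s deg_s; rewrite -(size_map (fun m => 'X_[m] : {mpoly K[n]})).
apply/eqP; rewrite eqn_leq dimspan_leq_size dimspanE /=.
set A := span_mx b _.
have AAt : A *m A^T = 1%:M.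
  apply/matrixP => i k; rewrite !mxE.
  have lt_is : (i < size s)%N by rewrite -(size_map (fun m => 'X_[m] : {mpoly K[n]})).
  have lt_ks : (k < size s)%N by rewrite -(size_map (fun m => 'X_[m] : {mpoly K[n]})).
  under eq_bigr => j _ do rewrite !mxE !(nth_map 0%MM) // !mcoeffX.
  rewrite (sum_enum_bmnm_eq (fun x => (nth 0%MM s k == x)%:R)).
    by rewrite nth_uniq // eq_sym.
  exact: (allP deg_s _ (mem_nth _ _)).
by have := mxrankM_maxl A A^T; rewrite AAt mxrank1.
Qed.

Definition mons_deg k : seq 'X_{1..n} :=
  [seq val m | m <- enum {: 'X_{1..n < k.+1}} & mdeg (val m) == k].

Lemma SbasisE k : Sbasis K n k = [seq 'X_[m] | m <- mons_deg k].
Proof. by rewrite /Sbasis /mons_deg -map_comp. Qed.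

Lemma mons_deg_uniq k : uniq (mons_deg k).
Proof. by rewrite (map_inj_uniq val_inj) filter_uniq // enum_uniq. Qed.

Lemma mem_mons_deg k t : (t \in mons_deg k) = (mdeg t == k).
Proof.
apply/mapP/idP => [[x]|/eqP deg_t]; first by rewrite mem_filter => /andP [? _] ->.
have lt_t : (mdeg t < k.+1)%N by rewrite deg_t.
by exists (BMultinom lt_t); rewrite // mem_filter mem_enum /= deg_t eqxx.
Qed.

Lemma HF_SE k : HF_S K n k = size (mons_deg k).
Proof.
rewrite /HF_S SbasisE dimspan_monomials ?mons_deg_uniq //.
by apply/allP => t; rewrite mem_mons_deg => /eqP ->.
Qed.

Lemma dimspan_lt_HF_S d (s : seq {mpoly K[n]}) (c : 'X_{1..n} -> K) :
  (forall p, p \in s -> exists r : seq 'X_{1..n},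
     [/\ p = \sum_(t <- r) 'X_[t], all (fun t => mdeg t == d) r
       & \sum_(t <- r) c t = 0]) ->
  (exists m0, mdeg m0 = d /\ c m0 != 0) ->
  (dimspan d.+1 s < HF_S K n d)%N.
Proof.
move=> ker_s [m0 [deg_m0 c_m0]].
rewrite /HF_S !dimspanE.
set B := span_mx d.+1 s; set S := span_mx d.+1 (Sbasis K n d).
pose w : 'cV[K]_#|{: 'X_{1..n < d.+1}}| := \col_j c (val (enum_val j)).
have sub_BS : (B <= S)%MS.
  apply/row_subP => i; rewrite rowK.
  have [r [-> deg_r _]] := ker_s _ (mem_nth 0 (ltn_ord i)).
  elim: r deg_r => [|t r IHr]; first by rewrite big_nil coefrow0 sub0mx.
  rewrite big_cons coefrowD /= => /andP [deg_t deg_r]; rewrite addmx_sub ?IHr //.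
  by apply: coefrow_sub_span; rewrite SbasisE map_f // mem_mons_deg.
have Bw0 : B *m w = 0.
  apply/matrixP => i j; rewrite !mxE.
  have [r [s_i deg_r c_r]] := ker_s _ (mem_nth 0 (ltn_ord i)).
  under eq_bigr => k _ do rewrite !mxE s_i raddf_sum mulr_suml.
  rewrite exchange_big /= -[RHS]c_r !big_seq; apply: eq_bigr => t r_t.
  under eq_bigr => k _ do rewrite /= mcoeffX.
  by apply: sum_enum_bmnm_eq; rewrite (eqP (allP deg_r t r_t)).
have Sw_neq0 : S *m w != 0.
  have lt_m0 : (index m0 (mons_deg d) < size (Sbasis K n d))%N.
    by rewrite SbasisE size_map index_mem mem_mons_deg deg_m0.
  have Sbasis_m0 : (Sbasis K n d)`_(index m0 (mons_deg d)) = 'X_[m0].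
    by rewrite SbasisE (nth_map 0%MM) ?nth_index ?index_mem ?mem_mons_deg ?deg_m0.
  apply/eqP => /matrixP /(_ (Ordinal lt_m0) 0); rewrite !mxE.
  under eq_bigr => k _ do rewrite !mxE /= Sbasis_m0 mcoeffX.
  by rewrite sum_enum_bmnm_eq ?deg_m0 //; apply/eqP.
have : (B <= S :&: kermx w)%MS by rewrite sub_capmx sub_BS; apply/sub_kermxP.
move/mxrankS; have := mxrank_mul_ker S w.
have : (\rank (S *m w) != 0)%N by rewrite mxrank_eq0.
lia.
Qed.

End Dimspan.

Lemma size_mons_deg n k : size (mons_deg n.+1 k) = 'C(k + n, k).
Proof.
rewrite -(size_basis n k); apply/perm_size/uniq_perm.
- exact: mons_deg_uniq.
- exact: uniq_basis.
- by move=> t; rewrite mem_mons_deg basis_cover.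
Qed.

Lemma card_bmnm_leq_size n b (A : {set 'X_{1..n < b}}) (s : seq 'X_{1..n}) :
  (forall x, x \in A -> val x \in s) -> (#|A| <= size s)%N.
Proof.
move=> A_s; rewrite cardE -(size_map val); apply: uniq_leq_size.
  by rewrite (map_inj_uniq val_inj) enum_uniq.
by move=> y /mapP [x x_A ->]; apply: A_s; rewrite -mem_enum.
Qed.

Lemma exists_set_between (T : finType) (A C : {set T}) k :
  A \subset C -> (#|A| <= k <= #|C|)%N ->
  exists B : {set T}, [/\ A \subset B, B \subset C & #|B| = k].
Proof.
move=> sub_AC /andP [le_Ak].
have [m ->] : exists m, k = (#|A| + m)%N by exists (k - #|A|)%N; lia.
elim: m A sub_AC {le_Ak} => [|m IHm] A sub_AC le_C.
  by exists A; rewrite addn0.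
have /properP [_ [x C_x A'x]] : A \proper C by rewrite properEcard sub_AC /=; lia.
have card_xA : #|x |: A| = #|A|.+1 by rewrite cardsU1 A'x.
have sub_xA_C : x |: A \subset C by rewrite subUset sub1set C_x sub_AC.
have le_xA_C : (#|x |: A| + m <= #|C|)%N by rewrite card_xA; lia.
have [B [sub_xA_B sub_BC card_B]] := IHm _ sub_xA_C le_xA_C.
exists B; split => //; last by rewrite card_B card_xA addSnnS.
exact: subset_trans (subsetUr [set x] A) sub_xA_B.
Qed.

Definition mons_deg_set n d := [set x : 'X_{1..n < d.+1} | mdeg (val x) == d].

Lemma card_mons_deg_set n d : #|mons_deg_set n d| = size (mons_deg n d).
Proof.
rewrite cardE -(size_map val); apply/perm_size/uniq_perm.
- by rewrite (map_inj_uniq val_inj) enum_uniq.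
- exact: mons_deg_uniq.
move=> t; rewrite mem_mons_deg; apply/mapP/eqP => [[x]|deg_t].
  by rewrite mem_enum inE => /eqP deg_x ->.
have lt_t : (mdeg t < d.+1)%N by rewrite deg_t.
by exists (BMultinom lt_t); rewrite // mem_enum inE /= deg_t.
Qed.

Section MonomialIdeal.
Variables (K : fieldType) (n : nat).
Local Open Scope ring_scope.

Lemma HF_A_below_gens (G : seq 'X_{1..n}) k :
  (forall g, g \in G -> k < mdeg g)%N -> HF_A K G k = HF_S K n k.
Proof.
move=> deg_G; rewrite /HF_A.
suff -> : dimspan k.+1 (Ipart K G k) = 0%N by rewrite subn0.
apply/eqP; rewrite -leqn0; apply: leq_trans (dimspan_leq_size (K := K) k.+1 [::]).
apply: dimspanS => y /flatten_mapP [g G_g /mapP [m]]; rewrite mem_filter => /andP [/eqP deg_mg _] _.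
by have := deg_G g G_g; lia.
Qed.

Lemma size_gens_leq_dimspan (G : seq 'X_{1..n}) d :
  uniq G -> all (fun g => mdeg g == d) G -> (size G <= dimspan d.+1 (Ipart K G d))%N.
Proof.
move=> uniq_G deg_G.
have deg_G' : all (fun g => mdeg g < d.+1)%N G.
  by apply/allP => g /(allP deg_G) /eqP ->.
rewrite -(dimspan_monomials K uniq_G deg_G'); apply: dimspanS => y /mapP [g G_g ->].
have lt_0 : (mdeg (0%MM : 'X_{1..n}) < d.+1)%N by rewrite mdeg0.
apply/flatten_mapP; exists g => //; apply/mapP; exists (BMultinom lt_0).
  by rewrite mem_filter mem_enum andbT /= mdeg0 (allP deg_G).
by rewrite /= mpolyX0 mul1r.
Qed.

Lemma artinian_of_pure_powers (G : seq 'X_{1..n}) d :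
  (forall i : 'I_n, (U_(i) *+ d)%MM \in G) -> artinian K G.
Proof.
move=> pure_G; exists (n * d).+1 => k le_nd_k; apply/eqP; rewrite /HF_A subn_eq0.
apply: dimspanS => y; rewrite SbasisE => /mapP [t]; rewrite mem_mons_deg => /eqP deg_t ->.
have [i le_d_ti] : exists i, (d <= t i)%N.
  apply/existsP; apply: contraLR le_nd_k => /existsPn lt_t_d; rewrite -ltnNge ltnS -deg_t.
  rewrite mdegE -[X in (_ <= X * d)%N]card_ord -sum_nat_const.
  by apply: leq_sum => j _; apply: ltnW; rewrite ltnNge lt_t_d.
have le_pure_t : (U_(i) *+ d <= t)%MM.
  apply/mnm_lepP => j; rewrite mulmnE mnm1E.
  by case: eqP => [<-|]; rewrite ?mul1n ?mul0n.
have lt_rest : (mdeg (t - U_(i) *+ d)%MM < k.+1)%N by have := mdegB t (U_(i) *+ d)%MM; lia.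
apply/flatten_mapP; exists (U_(i) *+ d)%MM => //.
apply/mapP; exists (BMultinom lt_rest); last by rewrite /= -mpolyXD submK.
by rewrite mem_filter mem_enum andbT /= -mdegD submK ?deg_t.
Qed.

Definition kills_ell_multiples (c : 'X_{1..n} -> K) :=
  forall m, \sum_(i < n) c (m + U_(i))%MM = 0.

Lemma ell_mulX (t : 'X_{1..n}) :
  ell K n * 'X_[t] = \sum_(u <- [seq (t + U_(i))%MM | i <- enum 'I_n]) 'X_[u].
Proof.
rewrite big_map big_enum /= /ell mulr_suml; apply: eq_bigr => i _.
by rewrite mpolyXD mulrC.
Qed.

Lemma dimspan_ell_Ipart_lt (c : 'X_{1..n} -> K) (G : seq 'X_{1..n}) k :
  kills_ell_multiples c -> (exists m0, mdeg m0 = k.+1 /\ c m0 != 0) ->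
  all (fun g => mdeg g == k.+1) G -> {in G, forall g, c g = 0} ->
  (dimspan k.+2 ([seq (ell K n * p)%R | p <- Sbasis K n k] ++ Ipart K G k.+1)
     < HF_S K n k.+1)%N.
Proof.
move=> kill_c c_m0 deg_G c_G.
apply: (dimspan_lt_HF_S (c := c)) c_m0 => p; rewrite mem_cat => /orP [/mapP [q]|].
  rewrite SbasisE => /mapP [t]; rewrite mem_mons_deg => /eqP deg_t -> ->.
  exists [seq (t + U_(i))%MM | i <- enum 'I_n]; split.
  - exact: ell_mulX.
  - by apply/allP => u /mapP [i _ ->]; rewrite mdegD mdeg1 deg_t addn1.
  - by rewrite big_map big_enum; apply: kill_c.
case/flatten_mapP => g G_g /mapP [m].
have deg_g := eqP (allP deg_G g G_g).
rewrite mem_filter mem_enum andbT deg_g => deg_m ->.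
have m_0 : val m = 0%MM by apply/eqP; rewrite -mdeg_eq0 -(eqn_add2r k.+1) add0n.
exists [:: g]; split; first by rewrite big_seq1 m_0 mpolyX0 mul1r.
  by rewrite /= deg_g eqxx.
by rewrite big_seq1 c_G.
Qed.

Lemma fails_WLP_surj_of_functional (c : 'X_{1..n} -> K) (G : seq 'X_{1..n}) k :
  kills_ell_multiples c -> (exists m0, mdeg m0 = k.+1 /\ c m0 != 0) ->
  uniq G -> all (fun g => mdeg g == k.+1) G -> {in G, forall g, c g = 0} ->
  (HF_S K n k.+1 <= size G + HF_S K n k)%N ->
  fails_WLP_surj_in K G k.
Proof.
move=> kill_c c_m0 uniq_G deg_G c_G size_G.
have HF_Ak : HF_A K G k = HF_S K n k.
  by apply: HF_A_below_gens => g /(allP deg_G) /eqP ->.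
have le_G_I := size_gens_leq_dimspan uniq_G deg_G.
have le_HF_A : (HF_A K G k.+1 <= HF_A K G k)%N by rewrite HF_Ak /HF_A; lia.
split => //; rewrite /fails_WLP_in (minn_idPr le_HF_A) /rank_ell /HF_A.
have lt_img := dimspan_ell_Ipart_lt kill_c c_m0 deg_G c_G.
have le_I_img : (dimspan k.+2 (Ipart K G k.+1) <=
                 dimspan k.+2 ([seq (ell K n * p)%R | p <- Sbasis K n k] ++ Ipart K G k.+1))%N.
  by apply: dimspanS => y I_y; rewrite mem_cat I_y orbT.
lia.
Qed.

Definition supp_deg (c : 'X_{1..n} -> K) d :=
  [set x : 'X_{1..n < d.+1} | (mdeg (val x) == d) && (c (val x) != 0)].

Lemma exists_gens_off_supp (c : 'X_{1..n} -> K) d nu :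
  (forall i : 'I_n, c (U_(i) *+ d)%MM = 0) ->
  (#|supp_deg c d| <= nu)%N -> (nu + n <= HF_S K n d)%N ->
  exists G : seq 'X_{1..n},
    [/\ uniq G, size G = (HF_S K n d - nu)%N, all (fun g => mdeg g == d) G,
        {in G, forall g, c g = 0} & forall i : 'I_n, (U_(i) *+ d)%MM \in G].
Proof.
move=> c_pure le_supp le_nu.
pose P := [set x : 'X_{1..n < d.+1} | val x \in [seq (U_(i) *+ d)%MM | i <- enum 'I_n]].
have card_P : (#|P| <= n)%N.
  have := @card_bmnm_leq_size n d.+1 P [seq (U_(i) *+ d)%MM | i <- enum 'I_n].
  by rewrite size_map size_enum_ord; apply => x; rewrite inE.
pose D := mons_deg_set n d.
have card_D : #|D| = HF_S K n d by rewrite card_mons_deg_set HF_SE.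
have sub_supp : supp_deg c d \subset D :\: P.
  apply/subsetP => x; rewrite !inE => /andP [deg_x c_x]; rewrite deg_x andbT.
  by apply: contra c_x => /mapP [i _ ->]; rewrite c_pure.
have le_nu_DP : (nu <= #|D :\: P|)%N.
  by rewrite cardsD; have := subset_leq_card (subsetIr D P); lia.
have [M [supp_M sub_M card_M]] := exists_set_between sub_supp (introT andP (conj le_supp le_nu_DP)).
have sub_MD : M \subset D by apply: subset_trans sub_M (subsetDl _ _).
pose G := [seq val x | x <- enum (D :\: M)].
have G_D g : g \in G -> mdeg g = d /\ c g = 0.
  case/mapP => x; rewrite mem_enum !inE => /andP [M'x deg_x] ->; split; first exact/eqP.
  apply/eqP; apply: contraNT M'x => c_x; apply: (subsetP supp_M).
  by rewrite inE deg_x.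
exists G; split.
- by rewrite (map_inj_uniq val_inj) enum_uniq.
- by rewrite size_map -cardE cardsD (setIidPr sub_MD) card_D card_M.
- by apply/allP => g /G_D [-> _].
- by move=> g /G_D [].
move=> i; have lt_pure : (mdeg (U_(i) *+ d)%MM < d.+1)%N by rewrite mdegMn mdeg1 mul1n.
apply/mapP; exists (BMultinom lt_pure) => //.
rewrite mem_enum !inE /= mdegMn mdeg1 mul1n eqxx andbT.
have pure_i : (U_(i) *+ d)%MM \in [seq (U_(j) *+ d)%MM | j <- enum 'I_n].
  by apply/mapP; exists i; rewrite ?mem_enum.
by apply/negP => /(subsetP sub_M); rewrite !inE /= pure_i.
Qed.

End MonomialIdeal.

Lemma sumr_vanishing_off (V : nmodType) n (L : seq 'I_n) (F : 'I_n -> V) : uniq L ->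
  (forall i, i \notin L -> F i = 0%R) -> (\sum_i F i = \sum_(i <- L) F i)%R.
Proof.
move=> uniq_L F_L; rewrite (bigID (mem L)) /= [X in (_ + X)%R]big1 ?addr0 //.
by rewrite big_uniq.
Qed.

Section SupportedIn.
Variable n : nat.
Implicit Types (L : seq 'I_n) (m : 'X_{1..n}).

Definition supported_in L m := [forall j, (j \notin L) ==> (m j == 0%N)].

Lemma supported_inP L m : reflect (forall j, j \notin L -> m j = 0%N) (supported_in L m).
Proof.
apply: (iffP forallP) => [supp_m j L'j|m_L j]; last by apply/implyP => /m_L ->.
exact/eqP/(implyP (supp_m j)).
Qed.

Lemma supported_inD L m1 m2 :
  supported_in L (m1 + m2)%MM = supported_in L m1 && supported_in L m2.
Proof.
apply/supported_inP/andP => [m12_L|[/supported_inP m1_L /supported_inP m2_L] j L'j].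
  by split; apply/supported_inP => j /m12_L /eqP; rewrite mnmDE addn_eq0 => /andP [/eqP ? /eqP ?].
by rewrite mnmDE m1_L ?m2_L.
Qed.

Lemma supported_in1 L i : supported_in L U_(i)%MM = (i \in L).
Proof.
apply/supported_inP/idP => [U_L|L_i j L'j]; last first.
  by rewrite mnm1E; case: eqP => // ij; rewrite -ij L_i in L'j.
by apply/negPn/negP => /U_L /eqP; rewrite mnm1E eqxx.
Qed.

Lemma supported_inMn L m k : supported_in L m -> supported_in L (m *+ k)%MM.
Proof. by move=> /supported_inP m_L; apply/supported_inP => j /m_L; rewrite mulmnE => ->. Qed.

Lemma mdeg_supported_in L m : uniq L -> supported_in L m -> mdeg m = \sum_(j <- L) m j.
Proof.
move=> uniq_L /supported_inP m_L.
by rewrite mdegE (sumr_vanishing_off (V := nat) uniq_L) // => j /m_L.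
Qed.

Lemma card_supported_leq b L (A : {set 'X_{1..n < b}}) (s : seq (seq nat)) :
  (forall x, x \in A -> supported_in L (val x) && ([seq val x j | j <- L] \in s)) ->
  (#|A| <= size s)%N.
Proof.
move=> A_s; rewrite cardE -(size_map (fun x : 'X_{1..n < b} => [seq val x j | j <- L])).
apply: uniq_leq_size => [|y /mapP [x]]; last by rewrite mem_enum => /A_s /andP [_ ?] ->.
rewrite map_inj_in_uniq ?enum_uniq // => x y; rewrite !mem_enum.
move=> /A_s /andP [/supported_inP x_L _] /A_s /andP [/supported_inP y_L _] xy_L.
apply/val_inj/mnmP => j; have [L_j|L'j] := boolP (j \in L); last by rewrite x_L ?y_L.
move/(congr1 (nth 0%N ^~ (index j L))): xy_L.
by rewrite !(nth_map j) ?index_mem // nth_index.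
Qed.

End SupportedIn.

Section FourVariableForm.
Variables (K : fieldType) (n : nat) (i0 i1 i2 i3 : 'I_n).
Hypotheses (ne01 : i0 != i1) (ne02 : i0 != i2) (ne03 : i0 != i3)
  (ne12 : i1 != i2) (ne13 : i1 != i3) (ne23 : i2 != i3).
Local Open Scope ring_scope.

Let idx := [:: i0; i1; i2; i3].

Let idx_uniq : uniq idx.
Proof. by rewrite /= !inE !negb_or ne01 ne02 ne03 ne12 ne13 ne23. Qed.

Let idx_neq := (negbTE ne01, negbTE ne02, negbTE ne03, negbTE ne12, negbTE ne13,
  negbTE ne23, etrans (eq_sym _ _) (negbTE ne01), etrans (eq_sym _ _) (negbTE ne02),
  etrans (eq_sym _ _) (negbTE ne03), etrans (eq_sym _ _) (negbTE ne12),
  etrans (eq_sym _ _) (negbTE ne13), etrans (eq_sym _ _) (negbTE ne23)).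

Definition form4 (m : 'X_{1..n}) : K :=
  if supported_in idx m && (m i2 + m i3 == 1)%N then (-1) ^+ (m i0 + m i3) else 0.

Lemma form4_kills_ell : kills_ell_multiples form4.
Proof.
move=> m; rewrite (sumr_vanishing_off idx_uniq); last first.
  by move=> i idx'i; rewrite /form4 supported_inD supported_in1 (negbTE idx'i) andbF.
rewrite !big_cons big_nil /form4 !supported_inD !supported_in1 !inE !eqxx !orbT !andbT.
case: (supported_in idx m) => /=; last by rewrite !addr0.
rewrite !mnmDE !mnm1E !eqxx !idx_neq /= !addn0 ?addn1 ?addnS ?addSn /= addr0.
by case: (_ == 1)%N; case: (_ == 1)%N; rewrite ?exprS; ring.
Qed.

Lemma form4_pure d i : (2 <= d)%N -> form4 (U_(i) *+ d)%MM = 0.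
Proof.
move=> le2d; rewrite /form4 !mulmnE !mnm1E.
suff /negbTE -> : ((i == i2) * d + (i == i3) * d != 1)%N by rewrite andbF.
by have [->|_] := eqVneq i i2; rewrite ?idx_neq; case: (i == i3) => /=; lia.
Qed.

Lemma form4_witness d : (1 <= d)%N -> exists m0, mdeg m0 = d /\ form4 m0 != 0.
Proof.
move=> le1d; exists (U_(i1) *+ d.-1 + U_(i2))%MM; split.
  by rewrite mdegD mdegMn !mdeg1; lia.
rewrite /form4 supported_inD supported_inMn ?supported_in1 ?inE ?eqxx ?orbT //=.
by rewrite !mnmDE !mulmnE !mnm1E !eqxx !idx_neq /= expr0 oner_neq0.
Qed.

Let supp4 d := [seq [:: a; d.-1 - a; 1; 0]%N | a <- iota 0 d]
             ++ [seq [:: a; d.-1 - a; 0; 1]%N | a <- iota 0 d].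

Let form4_supp d m : mdeg m = d -> form4 m != 0 ->
  supported_in idx m && ([seq m j | j <- idx] \in supp4 d).
Proof.
rewrite /form4 => deg_m; case: ifP => [/andP [supp_m /eqP deg23] _|_]; last by rewrite eqxx.
rewrite supp_m /= mem_cat.
have := mdeg_supported_in idx_uniq supp_m; rewrite deg_m !big_cons big_nil addn0 => deg_sum.
have -> : (m i1 = d.-1 - m i0)%N by lia.
have lt_m0 : (m i0 < d)%N by lia.
have [[-> ->]|[-> ->]] : (m i2 = 1 /\ m i3 = 0 \/ m i2 = 0 /\ m i3 = 1)%N by lia.
  by apply/orP; left; apply/mapP; exists (m i0); rewrite ?mem_iota.
by apply/orP; right; apply/mapP; exists (m i0); rewrite ?mem_iota.
Qed.

Lemma card_supp_form4 d : (#|supp_deg form4 d| <= 2 * d)%N.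
Proof.
have -> : (2 * d = size (supp4 d))%N by rewrite size_cat !size_map size_iota addnn mul2n.
by apply: card_supported_leq => x; rewrite inE => /andP [/eqP]; apply: form4_supp.
Qed.

End FourVariableForm.

Section ThreeVariableForm.
Variables (K : fieldType) (n : nat) (i0 i1 i2 : 'I_n).
Hypotheses (ne01 : i0 != i1) (ne02 : i0 != i2) (ne12 : i1 != i2).
Local Open Scope ring_scope.

Let idx := [:: i0; i1; i2].

Let idx_uniq : uniq idx.
Proof. by rewrite /= !inE !negb_or ne01 ne02 ne12. Qed.

Let idx_neq := (negbTE ne01, negbTE ne02, negbTE ne12, etrans (eq_sym _ _) (negbTE ne01),
  etrans (eq_sym _ _) (negbTE ne02), etrans (eq_sym _ _) (negbTE ne12)).

Definition form3 (m : 'X_{1..n}) : K :=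
  if supported_in idx m then
    match m i2 with
    | 0 => (-1) ^+ m i0 * (m i0 * m i1)%:R
    | 1 => (-1) ^+ m i0 * ((m i1)%:R - (m i0)%:R)
    | 2 => - ((-1) ^+ m i0 *+ 2)
    | _ => 0
    end
  else 0.

Lemma form3_kills_ell : kills_ell_multiples form3.
Proof.
move=> m; rewrite (sumr_vanishing_off idx_uniq); last first.
  by move=> i idx'i; rewrite /form3 supported_inD supported_in1 (negbTE idx'i) andbF.
rewrite !big_cons big_nil /form3 !supported_inD !supported_in1 !inE !eqxx !orbT !andbT.
case: (supported_in idx m); last by rewrite !addr0.
rewrite !mnmDE !mnm1E !eqxx !idx_neq !addn0 !addn1 addr0.
move: (m i0) (m i1) (m i2) => a b [|[|[|p]]] /=; rewrite ?natrM ?mulrSr ?exprS; ring.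
Qed.

Lemma form3_pure d i : (3 <= d)%N -> form3 (U_(i) *+ d)%MM = 0.
Proof.
case: d => [|[|[|d]]] // _; rewrite /form3; case: ifP => // _; rewrite !mulmnE !mnm1E.
have [->|ne_i0] := eqVneq i i0; first by rewrite !idx_neq /= mul0n muln0 mulr0.
have [->|ne_i1] := eqVneq i i1; first by rewrite !idx_neq /= mul0n mulr0.
by case: (i == i2); rewrite /= ?mul0n ?mulr0.
Qed.

Lemma form3_witness d : (2%:R != 0 :> K) -> (2 <= d)%N ->
  exists m0, mdeg m0 = d /\ form3 m0 != 0.
Proof.
move=> two_neq0 le2d; exists (U_(i1) *+ (d - 2) + U_(i2) *+ 2)%MM; split.
  by rewrite mdegD !mdegMn !mdeg1; lia.
rewrite /form3 supported_inD !supported_inMn ?supported_in1 ?inE ?eqxx ?orbT //.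
rewrite !mnmDE !mulmnE !mnm1E !eqxx !idx_neq /=.
by rewrite expr0 oppr_eq0.
Qed.

Let supp3 d := [seq [:: a; d - a; 0]%N | a <- iota 1 d.-1]
            ++ [seq [:: a; d.-1 - a; 1]%N | a <- iota 0 d & a.*2 != d.-1]
            ++ [seq [:: a; d - 2 - a; 2]%N | a <- iota 0 d.-1].

Let size_supp3 d : (1 <= d)%N ->
  (size (supp3 d) <= (if odd d then 3 * (d - 1) else 3 * (d - 1) + 1))%N.
Proof.
move=> le1d; rewrite !size_cat !size_map !size_iota size_filter.
suff : (count (fun a => a.*2 != d.-1) (iota 0 d) <= d - odd d)%N.
  by case: (odd d) => /=; lia.
case odd_d: (odd d); last by rewrite subn0 -[X in (_ <= X)%N](size_iota 0 d) count_size.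
have := count_predC (fun a => a.*2 != d.-1) (iota 0 d); rewrite size_iota.
suff : (0 < count (predC (fun a => a.*2 != d.-1)) (iota 0 d))%N by lia.
have := odd_double_half d; rewrite odd_d => half_d.
rewrite -has_count; apply/hasP; exists d./2; first by rewrite mem_iota; lia.
by rewrite /= negbK; apply/eqP; lia.
Qed.

Let form3_supp d m : mdeg m = d -> form3 m != 0 ->
  supported_in idx m && ([seq m j | j <- idx] \in supp3 d).
Proof.
rewrite /form3 => deg_m; case: ifP => [supp_m|_]; last by rewrite eqxx.
have := mdeg_supported_in idx_uniq supp_m; rewrite deg_m !big_cons big_nil addn0.
rewrite /= !mem_cat; case: (m i2) => [|[|[|p]]] deg_sum c_m.
- have /andP [m0_gt0 m1_gt0] : ((0 < m i0) && (0 < m i1))%N.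
    by rewrite -muln_gt0 lt0n; apply: contraNneq c_m => ->; rewrite mulr0.
  have -> : (m i1 = d - m i0)%N by lia.
  by apply/orP; left; apply/mapP; exists (m i0); rewrite // mem_iota; lia.
- have ne_m01 : m i1 != m i0 by apply: contraNneq c_m => ->; rewrite subrr mulr0.
  have -> : (m i1 = d.-1 - m i0)%N by lia.
  apply/orP; right; apply/orP; left; apply/mapP; exists (m i0) => //.
  by rewrite mem_filter mem_iota; apply/andP; split; [apply: contra ne_m01 => /eqP ?; apply/eqP|]; lia.
- have -> : (m i1 = d - 2 - m i0)%N by lia.
  by apply/orP; right; apply/orP; right; apply/mapP; exists (m i0); rewrite // mem_iota; lia.
- by rewrite eqxx in c_m.
Qed.

Lemma card_supp_form3 d : (1 <= d)%N ->
  (#|supp_deg form3 d| <= (if odd d then 3 * (d - 1) else 3 * (d - 1) + 1))%N.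
Proof.
move=> le1d; apply: leq_trans (size_supp3 le1d).
by apply: card_supported_leq => x; rewrite inE => /andP [/eqP]; apply: form3_supp.
Qed.

End ThreeVariableForm.

Definition beta_defect n d :=
  if n == 3 then (if odd d then 3 * (d - 1) else 3 * (d - 1) + 1) else 2 * d.

Lemma exists_functional (K : fieldType) n d :
  (2%:R != 0 :> K)%R -> (3 <= n)%N -> (2 <= d)%N -> ~ (n = 3 /\ d = 2) ->
  exists c : 'X_{1..n} -> K,
    [/\ kills_ell_multiples c, forall i : 'I_n, c (U_(i) *+ d)%MM = 0%R,
        exists m0, mdeg m0 = d /\ c m0 != 0%R
      & (#|supp_deg c d| <= beta_defect n d)%N].
Proof.
move=> two_neq0 le3n le2d not_3_2.
have le1d : (1 <= d)%N := ltnW le2d.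
pose i0 := Ordinal (leq_trans (isT : 1 <= 3)%N le3n).
pose i1 := Ordinal (leq_trans (isT : 2 <= 3)%N le3n).
pose i2 := Ordinal le3n.
rewrite /beta_defect; case: eqP => [n_3|/eqP ne_n3].
  have le3d : (3 <= d)%N by move: not_3_2; rewrite n_3; lia.
  exists (form3 K i0 i1 i2); split.
  - exact: form3_kills_ell.
  - by move=> i; apply: form3_pure.
  - exact: form3_witness.
  - exact: card_supp_form3.
have le4n : (4 <= n)%N by rewrite ltn_neqAle eq_sym ne_n3.
exists (form4 K i0 i1 i2 (Ordinal le4n)); split.
- exact: form4_kills_ell.
- by move=> i; apply: form4_pure.
- exact: form4_witness.
- exact: card_supp_form4.
Qed.

Lemma HF_S_binom (K : fieldType) n k : HF_S K n.+1 k = 'C(k + n, k).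
Proof. by rewrite HF_SE size_mons_deg. Qed.

Lemma binom_ge_succ n e : (2 <= n)%N -> (1 <= e)%N -> (n.+1 <= 'C(e + n, e.+1))%N.
Proof.
move=> le2n; case: e => // e _; elim: e => [|e IHe].
  by rewrite bin2 /=; nia.
by rewrite addSn binS; lia.
Qed.

Lemma beta_defect_leq_binom n e : (2 <= n)%N -> (1 <= e)%N ->
  (beta_defect n.+1 e.+1 <= 'C(e + n, e))%N <-> ~ (n.+1 = 3 /\ e.+1 = 2).
Proof.
rewrite /beta_defect => le2n le1e; case: eqP => [[n_2]|ne_n2]; last first.
  split=> [_ [/ne_n2] //|_]; case: e le1e => // e _.
  elim: e => [|e IHe]; first by rewrite bin1; lia.
  by rewrite addSn binS; have := @binom_ge_succ n e.+1 le2n isT; lia.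
rewrite n_2 (_ : 'C(e + 2, e) = 'C(e + 2, 2)); last by rewrite -{2}[e](addnK 2) bin_sub ?leq_addl.
case: e le1e => [|[|[|e]]] // _; first by split=> // -[].
  by split=> // _ [].
by rewrite bin2; split=> [_ [] //|_]; case: odd => /=; nia.
Qed.

Theorem corollary4p2 (K : fieldType) (n d : nat) :
  [pchar K]%R =i pred0 -> (3 <= n)%N -> (2 <= d)%N ->
  (forall mu : nat,
     (HF_S K n d - HF_S K n d.-1 <= mu <= beta n d)%N ->
     exists G : seq 'X_{1..n},
       [/\ min_gens_deg G mu d, artinian K G & fails_WLP_surj_in K G d.-1])
  /\ ((HF_S K n d - HF_S K n d.-1 <= beta n d)%N <-> ~ (n = 3 /\ d = 2)).
Proof.
move=> charK0 le3n le2d.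
have two_neq0 : (2%:R != 0 :> K)%R by move/(_ 2): charK0; rewrite !inE /= => /negbT.
case: n le3n => [//|n] le3n; case: d le2d => [//|e] le2d /=.
have HF_succ : HF_S K n.+1 e.+1 = ('C(e + n, e.+1) + HF_S K n.+1 e)%N.
  by rewrite !HF_S_binom addSn binS.
have betaE : beta n.+1 e.+1 = ('C(e + n, e.+1) + HF_S K n.+1 e - beta_defect n.+1 e.+1)%N.
  by rewrite -HF_succ HF_S_binom /beta; congr ('C(_, _) - _)%N; lia.
have defect_le : (beta_defect n.+1 e.+1 <= HF_S K n.+1 e)%N <-> ~ (n.+1 = 3 /\ e.+1 = 2).
  by rewrite HF_S_binom; apply: beta_defect_leq_binom; lia.
have le_n_A : (n.+1 <= 'C(e + n, e.+1))%N by apply: binom_ge_succ; lia.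
rewrite HF_succ addnK betaE; split; last first.
  by split=> [le_beta|/defect_le]; [apply/defect_le|]; lia.
move=> mu /andP [le_A_mu le_mu_beta].
have not_3_2 : ~ (n.+1 = 3 /\ e.+1 = 2) by apply/defect_le; lia.
have [c [kill_c c_pure c_m0 supp_c]] := exists_functional two_neq0 le3n le2d not_3_2.
pose nu := (HF_S K n.+1 e.+1 - mu)%N.
have le_supp_nu : (#|supp_deg c e.+1| <= nu)%N by rewrite /nu HF_succ; lia.
have le_nu : (nu + n.+1 <= HF_S K n.+1 e.+1)%N by rewrite /nu HF_succ; lia.
have [G [uniq_G size_G deg_G c_G pure_G]] := exists_gens_off_supp c_pure le_supp_nu le_nu.
exists G; split.
- by split=> //; rewrite size_G HF_succ; lia.
- exact: artinian_of_pure_powers pure_G.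
apply: fails_WLP_surj_of_functional kill_c c_m0 uniq_G deg_G c_G _.
by rewrite size_G HF_succ; lia.
Qed.
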